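(* Let $\mathbf{S}_1, \mathbf{S}_2, \mathbf{S}_3 \subset \mathbb{R}^2$ be pairwise disjoint sets with $|\mathbf{S}_i| = 3$ for each $i$, such that the points of $\mathbf{S}_1\cup\mathbf{S}_2\cup\mathbf{S}_3\cup\{0\}$ are in general position (with $0 \notin \bigcup_i \mathbf{S}_i$) and $0 \in \operatorname{conv}(\mathbf{S}_i \cup \mathbf{S}_j)$ for all $i \neq j$. Then at least $3$ colourful triangles contain $0$. Moreover this bound is attained, i.e. $\mu^\Diamond(2) = 3$.
   Context: A colourful triangle is $\operatorname{conv}\{x_1,x_2,x_3\}$ with $x_i \in \mathbf{S}_i$ for each $i$ (closed); distinct choices of $(x_1,x_2,x_3)$ count as distinct. $\mu^\Diamond(d)$ denotes the minimum, over all configurations of pairwise disjoint sets $\mathbf{S}_1,\dots,\mathbf{S}_{d+1}\subset\mathbb{R}^d$ with $|\mathbf{S}_i|=d+1$, in general position together with $0$, satisfying $0 \in \operatorname{conv}(\mathbf{S}_i \cup \mathbf{S}_j)$ for all $i\ne j$, of the number of colourful simplices (one vertex from each $\mathbf{S}_i$) containing $0$. *)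

From HB Require Import structures.
From mathcomp Require Import all_boot all_order all_algebra.
From Stdlib Require Import ClassicalEpsilon.
Set Implicit Arguments. Unset Strict Implicit. Unset Printing Implicit Defensive.
Import Order.TTheory GRing.Theory Num.Theory.
Local Open Scope ring_scope.

Notation point R := 'rV[R]_2.

Definition asbool (P : Prop) : bool :=
  if excluded_middle_informative P then true else false.

Definition in_conv (R : realFieldType) (I : finType) (X : I -> point R)
    (x : point R) : Prop :=
  exists w : I -> R,
    (forall i, 0 <= w i) /\ \sum_i w i = 1 /\ \sum_i w i *: X i = x.

Definition collinear (R : realFieldType) (p q r : point R) : Prop :=
  (q 0 0 - p 0 0) * (r 0 1 - p 0 1) - (q 0 1 - p 0 1) * (r 0 0 - p 0 0) = 0.

(* A configuration: S i k is the k-th point of colour class S_(i+1),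
   i, k : 'I_3 (so d = 2, d+1 = 3 classes of d+1 = 3 points). *)
Definition config (R : realFieldType) := 'I_3 -> 'I_3 -> point R.

(* The points of S_1 ∪ S_2 ∪ S_3 ∪ {0}; None stands for the origin. *)
Definition all_pts (R : realFieldType) (S : config R)
    (o : option ('I_3 * 'I_3)) : point R :=
  if o is Some ik then S ik.1 ik.2 else 0.

(* The 9 points are pairwise distinct (pairwise disjoint sets of size 3),
   0 is not among them, and the 10 points S_1 ∪ S_2 ∪ S_3 ∪ {0} are in
   general position in the plane (no three distinct ones collinear). *)
Definition general_position (R : realFieldType) (S : config R) : Prop :=
  injective (all_pts S) /\
  forall a b c, a != b -> a != c -> b != c ->
    ~ collinear (all_pts S a) (all_pts S b) (all_pts S c).

Definition pair_condition (R : realFieldType) (S : config R) : Prop :=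
  forall i j : 'I_3, i != j ->
    in_conv (fun bk : bool * 'I_3 => S (if bk.1 then i else j) bk.2) 0.

Definition colourful_contains (R : realFieldType) (S : config R)
    (t : {ffun 'I_3 -> 'I_3}) : Prop :=
  in_conv (fun c : 'I_3 => S c (t c)) 0.

(* number of colourful triangles containing 0 (distinct choices counted
   separately) *)
Definition num_colourful (R : realFieldType) (S : config R) : nat :=
  #|[set t : {ffun 'I_3 -> 'I_3} | asbool (colourful_contains S t)]|.

(* Write [in_tri0 p q r] when 0 lies inside the triangle [pqr]: in general
   position the orientations [det2 p q], [det2 q r], [det2 r p] then have one sign,
   and this is equivalent to 0 lying in the convex hull of [p], [q], [r].

   Some colourful triangle contains 0. Otherwise, if 0 lies in [pqr] with [p], [q]
   of colour [i] and [r] of another colour [j], then for every point [x] of the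
   third colour [k] the Grassmann-Plucker relation puts 0 in [xqr], [pxr] or [pqx];
   the first two are colourful, so 0 lies in [pqx]. Swapping in the same way a
   point of colour [j] for that [x] shows that all of S_j and S_k lie in an open
   half-plane bounded by the line [pq], contradicting 0 in conv (S_j u S_k). A
   monochrome triangle containing 0 is reduced to this case by one more swap, so no
   triangle of the nine points contains 0; yet by Caratheodory's theorem some
   triangle of S_1 u S_2 does.

   Given a colourful triangle [T] containing 0 and any colourful [u], pick [y c] in
   S_c different from [T c] and [u c]. The octahedron whose antipodal pairs are
   [T c], [y c] has an even number of facets containing 0 (count the crossings of
   its edges with a ray from 0: every edge bounds two facets), so a second facet
   [t] contains 0, and [t] differs from [u] where it uses some [y c]. Applying this
   twice gives three colourful triangles. *)

From Stdlib Require Import Classical ClassicalEpsilon.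
From HB Require Import structures.
From mathcomp Require Import all_boot all_order all_algebra ring.
Import Order.TTheory GRing.Theory Num.Theory.
Local Open Scope ring_scope.

Lemma asboolP (P : Prop) : reflect P (asbool P).
Proof. by rewrite /asbool; case: excluded_middle_informative => h; constructor. Qed.

Lemma ord3_cases (c : 'I_3) : [\/ c = 0, c = 1 | c = 2].
Proof.
by case: c => [[|[|[|//]]] ?]; [apply: Or31 | apply: Or32 | apply: Or33]; apply: val_inj.
Qed.

Lemma sum_ord3 (V : nmodType) (F : 'I_3 -> V) : \sum_i F i = F 0 + F 1 + F 2.
Proof.
rewrite !big_ord_recl big_ord0 addr0 addrA.
by congr (_ + _ + _); congr F; apply: val_inj.
Qed.

Definition other_ord3 (a b : 'I_3) : 'I_3 :=
  if (0 != a) && (0 != b) then 0 else if (1 != a) && (1 != b) then 1 else 2.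

Lemma other_ord3P (a b : 'I_3) : (other_ord3 a b != a) && (other_ord3 a b != b).
Proof. by case: (ord3_cases a) => ->; case: (ord3_cases b) => ->. Qed.

(** * Triangles around the origin *)

Section PlaneDeterminant.
Context {R : realFieldType}.
Implicit Types p q r u v w x : point R.

Definition det2 p q : R := p 0 0 * q 0 1 - p 0 1 * q 0 0.

Lemma det2C p q : det2 q p = - det2 p q.
Proof. by rewrite /det2; ring. Qed.

Lemma det2xx p : det2 p p = 0.
Proof. by rewrite /det2 mulrC subrr. Qed.

Lemma det2Dr p x y : det2 p (x + y) = det2 p x + det2 p y.
Proof. by rewrite /det2 !mxE; ring. Qed.

Lemma det2Zr p a x : det2 p (a *: x) = a * det2 p x.
Proof. by rewrite /det2 !mxE; ring. Qed.

Lemma det20r p : det2 p 0 = 0.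
Proof. by rewrite /det2 !mxE; ring. Qed.

Lemma det20l q : det2 0 q = 0.
Proof. by rewrite det2C det20r oppr0. Qed.

Lemma det2Bl p q x : det2 (q - p) x = det2 q x - det2 p x.
Proof. by rewrite /det2 !mxE; ring. Qed.

Lemma det2_sumr p (I : finType) (w : I -> R) (X : I -> point R) :
  det2 p (\sum_i w i *: X i) = \sum_i w i * det2 p (X i).
Proof.
rewrite (big_morph (det2 p) (det2Dr p) (det20r p)).
by apply: eq_bigr => i _; rewrite det2Zr.
Qed.

Lemma det2_cramer u v w : det2 v w *: u + det2 w u *: v + det2 u v *: w = 0.
Proof.
apply/rowP => j; rewrite !mxE /det2.
have [->|->] : j = 0 \/ j = 1.
  by case: j => [[|[|//]] ?]; [left|right]; apply: val_inj.
all: ring.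
Qed.

Lemma det2_plucker u v w x :
  det2 v w * det2 x u + det2 w u * det2 x v + det2 u v * det2 x w = 0.
Proof. by rewrite /det2; ring. Qed.

Lemma neq0_lt0E (x : R) : x != 0 -> (x < 0) = ~~ (0 < x).
Proof. by move=> nx; rewrite ltNge le_eqVlt eq_sym (negbTE nx). Qed.

Lemma neq0_oppr_gt0E (x : R) : x != 0 -> (0 < - x) = ~~ (0 < x).
Proof. by move=> nx; rewrite oppr_gt0 neq0_lt0E. Qed.

Lemma neq0_mulr_gt0E (a b : R) :
  a != 0 -> b != 0 -> (0 < a * b) = ((0 < a) == (0 < b)).
Proof.
move=> na nb; have [ha|ha] := boolP (0 < a); first by rewrite pmulr_rgt0.
by rewrite nmulr_rgt0 ?neq0_lt0E //; case: (0 < b).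
Qed.

Lemma sum3_eq0_mixed_sign {a b c : R} : a + b + c = 0 ->
  a != 0 -> b != 0 -> c != 0 -> ~~ (((0 < a) == (0 < b)) && ((0 < b) == (0 < c))).
Proof.
move=> abc0 na nb nc.
have [ha|ha] := boolP (0 < a); have [hb|hb] := boolP (0 < b);
  have [hc|hc] := boolP (0 < c) => //=.
  by have := addr_gt0 (addr_gt0 ha hb) hc; rewrite abc0 ltxx.
have : 0 < - a - b - c by rewrite !addr_gt0 ?neq0_oppr_gt0E.
by rewrite -!opprD abc0 oppr0 ltxx.
Qed.

(* For [p], [q], [r] pairwise non-collinear with 0, this says that 0 lies in
   the interior of the triangle [pqr]. *)
Definition in_tri0 p q r :=
  ((0 < det2 p q) == (0 < det2 q r)) && ((0 < det2 q r) == (0 < det2 r p)).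

Lemma in_tri0_rot p q r : in_tri0 p q r = in_tri0 q r p.
Proof.
by rewrite /in_tri0; case: (0 < det2 p q); case: (0 < det2 q r); case: (0 < det2 r p).
Qed.

Lemma in_tri0_replace {u v w x : point R} :
  det2 u v != 0 -> det2 v w != 0 -> det2 w u != 0 ->
  det2 x u != 0 -> det2 x v != 0 -> det2 x w != 0 ->
  in_tri0 u v w -> [|| in_tri0 x v w, in_tri0 u x w | in_tri0 u v x].
Proof.
move=> nuv nvw nwu nxu nxv nxw.
have := sum3_eq0_mixed_sign (det2_plucker u v w x) (mulf_neq0 nvw nxu)
  (mulf_neq0 nwu nxv) (mulf_neq0 nuv nxw).
rewrite !neq0_mulr_gt0E // /in_tri0 (det2C x w) (det2C x v) (det2C x u).
rewrite !neq0_oppr_gt0E //.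
by case: (0 < det2 u v); case: (0 < det2 v w); case: (0 < det2 w u);
  case: (0 < det2 x u); case: (0 < det2 x v); case: (0 < det2 x w).
Qed.

(* The segment [pq] crosses the open ray from 0 through [W]. *)
Definition crosses_ray W p q :=
  ((0 < det2 W p) != (0 < det2 W q)) && ((0 < det2 p q) == (0 < det2 W q)).

Lemma in_tri0_crossings W {a b c : point R} :
  det2 W a != 0 -> det2 W b != 0 -> det2 W c != 0 ->
  det2 a b != 0 -> det2 b c != 0 -> det2 c a != 0 ->
  in_tri0 a b c = crosses_ray W a b (+) crosses_ray W b c (+) crosses_ray W c a.
Proof.
move=> na nb nc nab nbc nca.
have := sum3_eq0_mixed_sign (det2_plucker a b c W) (mulf_neq0 nbc na)
  (mulf_neq0 nca nb) (mulf_neq0 nab nc).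
rewrite !neq0_mulr_gt0E // /in_tri0 /crosses_ray.
by case: (0 < det2 W a); case: (0 < det2 W b); case: (0 < det2 W c);
  case: (0 < det2 a b); case: (0 < det2 b c); case: (0 < det2 c a).
Qed.

Section Octahedron.
Variables (W : point R) (A B C : bool -> point R).
Hypotheses (nWA : forall b, det2 W (A b) != 0) (nWB : forall b, det2 W (B b) != 0)
  (nWC : forall b, det2 W (C b) != 0).
Hypotheses (nAB : forall b b', det2 (A b) (B b') != 0)
  (nBC : forall b b', det2 (B b) (C b') != 0) (nCA : forall b b', det2 (C b) (A b') != 0).

Let facet b0 b1 b2 := in_tri0 (A b0) (B b1) (C b2).

(* Summing [in_tri0_crossings] over the eight facets counts every edge twice. *)
Lemma octahedron_facets_even :
  ~~ odd (facet false false false + facet false false true + facet false true false +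
          facet false true true + facet true false false + facet true false true +
          facet true true false + facet true true true).
Proof.
have cr b0 b1 b2 := in_tri0_crossings W (nWA b0) (nWB b1) (nWC b2)
  (nAB b0 b1) (nBC b1 b2) (nCA b2 b0).
rewrite /facet !cr.
by case: (crosses_ray W (A false) (B false)); case: (crosses_ray W (A false) (B true));
   case: (crosses_ray W (A true) (B false)); case: (crosses_ray W (A true) (B true));
   case: (crosses_ray W (B false) (C false)); case: (crosses_ray W (B false) (C true));
   case: (crosses_ray W (B true) (C false)); case: (crosses_ray W (B true) (C true));
   case: (crosses_ray W (C false) (A false)); case: (crosses_ray W (C false) (A true));
   case: (crosses_ray W (C true) (A false)); case: (crosses_ray W (C true) (A true)).
Qed.

Lemma octahedron_other_facet : facet false false false ->
  exists b0 b1 b2, (b0 || b1 || b2) && facet b0 b1 b2.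
Proof.
move=> f0; have := octahedron_facets_even; rewrite f0.
have other b0 b1 b2 : facet b0 b1 b2 -> b0 || b1 || b2 -> exists b0 b1 b2,
    (b0 || b1 || b2) && facet b0 b1 b2.
  by move=> hf hb; exists b0, b1, b2; rewrite hb.
by do 7!(case: (boolP (facet _ _ _)) => [hf _|_]; first exact: other hf isT).
Qed.

End Octahedron.

(** * Convex hulls containing the origin *)

Lemma det2_gt0_trans {p a b c : point R} :
  0 < det2 p a -> 0 < det2 p b -> 0 < det2 p c ->
  0 < det2 a b -> 0 < det2 b c -> 0 < det2 a c.
Proof.
move=> pa pb pc ab bc.
have : 0 < - (det2 c a * det2 p b).
  have /eqP := det2_plucker a b c p; rewrite addrAC addr_eq0 => /eqP <-.
  by rewrite addr_gt0 // mulr_gt0.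
by rewrite oppr_gt0 pmulr_llt0 // det2C oppr_lt0.
Qed.

Lemma in_conv_comp {I J : finType} (f : J -> I) {X : I -> point R} :
  in_conv (fun j => X (f j)) 0 -> in_conv X 0.
Proof.
case=> w [w0 [w1 wX]].
exists (fun i => \sum_(j | f j == i) w j); split; last split.
- by move=> i; apply: sumr_ge0.
- by rewrite -w1 (partition_big f predT).
rewrite -[RHS]wX [RHS](partition_big f predT) //=.
apply: eq_bigr => i _; rewrite scaler_suml.
by apply: eq_big => // j /eqP <-.
Qed.

Lemma in_conv0_no_open_halfplane {I : finType} {Y : I -> point R} d :
  in_conv Y 0 -> ~ (forall i, 0 < det2 d (Y i)).
Proof.
case=> w [w0 [w1 wY]] hpos.
have : \sum_i w i * det2 d (Y i) = 0 by rewrite -det2_sumr wY det20r.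
move/psumr_eq0P => /(_ (fun i _ => mulr_ge0 (w0 i) (ltW (hpos i)))) wd0.
move: w1; rewrite big1 => [/eqP|i _]; first by rewrite eq_sym oner_eq0.
by have /eqP := wd0 i isT; rewrite mulf_eq0 (gt_eqF (hpos i)) orbF => /eqP.
Qed.

Lemma in_conv0_no_tri0_edge {I : finType} {Y : I -> point R} {p q : point R} :
  in_conv Y 0 -> det2 p q != 0 ->
  (forall i, det2 q (Y i) != 0) -> (forall i, det2 (Y i) p != 0) ->
  ~ (forall i, in_tri0 p q (Y i)).
Proof.
move=> hY npq nq np ht.
have side i : (0 < det2 q (Y i)) = (0 < det2 p q) /\ (0 < det2 (Y i) p) = (0 < det2 p q).
  by have /andP [/eqP h1 /eqP h2] := ht i; rewrite -h2 h1.
have [pq|pq] := boolP (0 < det2 p q).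
  apply: (in_conv0_no_open_halfplane (q - p) hY) => i.
  have [h1 h2] := side i; rewrite pq in h1 h2.
  by rewrite det2Bl -det2C addr_gt0 ?h1 ?h2.
apply: (in_conv0_no_open_halfplane (p - q) hY) => i.
have [h1 h2] := side i; rewrite (negbTE pq) in h1 h2.
by rewrite det2Bl (det2C (Y i) p) addr_gt0 // neq0_oppr_gt0E ?h1 ?h2.
Qed.

Lemma in_conv0_det2_gt0 (I : finType) (X : I -> point R) i :
  (forall j, j != i -> det2 (X i) (X j) != 0) -> (exists j, j != i) ->
  in_conv X 0 -> exists j, 0 < det2 (X i) (X j).
Proof.
move=> nX [j0 j0i] [w [w0 [w1 wX]]].
case: (pickP (fun j => 0 < det2 (X i) (X j))) => [j|nonpos]; first by exists j.
have sum0 : \sum_j - (w j * det2 (X i) (X j)) = 0.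
  by rewrite sumrN -det2_sumr wX det20r oppr0.
have nneg j : true -> 0 <= - (w j * det2 (X i) (X j)).
  by rewrite oppr_ge0 mulr_ge0_le0 // leNgt nonpos.
have wd0 := psumr_eq0P nneg sum0.
have wj0 j : j != i -> w j = 0.
  move=> ji; have /eqP := wd0 j isT.
  by rewrite oppr_eq0 mulf_eq0 (negbTE (nX j ji)) orbF => /eqP.
rewrite (bigD1 i) //= big1 ?addr0 in w1; last by move=> j /wj0.
rewrite (bigD1 i) //= big1 ?addr0 in wX; last by move=> j /wj0 ->; rewrite scale0r.
rewrite w1 scale1r in wX.
by move: (nX j0 j0i); rewrite wX det20l eqxx.
Qed.

(* Caratheodory's theorem in the plane. *)
Lemma in_conv0_pos_tri {I : finType} {X : I -> point R} :
  (forall i j, i != j -> det2 (X i) (X j) != 0) -> (exists i j : I, i != j) ->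
  in_conv X 0 -> exists i j k,
    [/\ 0 < det2 (X i) (X j), 0 < det2 (X j) (X k) & 0 < det2 (X k) (X i)].
Proof.
move=> nX [i1 [i2 i12]] hX.
have pos i : exists j, 0 < det2 (X i) (X j).
  apply: in_conv0_det2_gt0 hX => [j ji|]; first by rewrite nX // eq_sym.
  by have [<-|] := eqVneq i1 i; [exists i2; rewrite eq_sym | exists i1].
have [j0 pj0] := pos i1.
pose L j := 0 < det2 (X i1) (X j).
pose F j := #|[pred k | L k && (0 < det2 (X k) (X j))]|.
(* [j] is the point of the half-plane [L] that comes last in angular order. *)
have [j Lj jmax] := @arg_maxnP I j0 L F pj0.
have [r pr] := pos j.
have nLr : ~~ L r.
  apply/negP => Lr; have := jmax r Lr; rewrite /= leqNgt => /negP; apply.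
  apply: proper_card; apply/properP; split.
    apply/subsetP => k; rewrite !inE => /andP [Lk pkj].
    by rewrite Lk (det2_gt0_trans Lk Lj Lr pkj pr).
  by exists j; rewrite !inE ?Lj ?pr // det2xx ltxx andbF.
have i1r : i1 != r.
  by apply: contraTneq pr => <-; rewrite det2C oppr_gt0 -leNgt ltW.
exists i1, j, r; split => //.
by rewrite det2C neq0_oppr_gt0E ?nX.
Qed.

Lemma same_sign_div_sum_ge0 {a b c : R} : a != 0 -> b != 0 -> c != 0 ->
  ((0 < a) == (0 < b)) && ((0 < b) == (0 < c)) ->
  a + b + c != 0 /\
  [/\ 0 <= a / (a + b + c), 0 <= b / (a + b + c) & 0 <= c / (a + b + c)].
Proof.
move=> na nb nc /andP [/eqP ab /eqP bc].
have [ha|ha] := boolP (0 < a).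
  have [hb hc] : 0 < b /\ 0 < c by rewrite -bc -ab.
  have hD : 0 < a + b + c by rewrite !addr_gt0.
  by rewrite gt_eqF // !divr_ge0 // ltW.
have [hb hc] : ~~ (0 < b) /\ ~~ (0 < c) by rewrite -bc -ab.
rewrite -!neq0_lt0E // in ha hb hc.
have hD : a + b + c < 0 by rewrite -oppr_gt0 !opprD !addr_gt0 ?oppr_gt0.
by rewrite lt_eqF // !mulr_le0 ?invr_le0 // ltW.
Qed.

Section Triangle.
Variable X : 'I_3 -> point R.
Hypothesis nX : forall i j, i != j -> det2 (X i) (X j) != 0.

Lemma in_tri0_in_conv3 : in_tri0 (X 0) (X 1) (X 2) -> in_conv X 0.
Proof.
set c := det2 (X 0) (X 1); set a := det2 (X 1) (X 2); set b := det2 (X 2) (X 0).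
move=> hX; have sgn : ((0 < a) == (0 < b)) && ((0 < b) == (0 < c)).
  by move: hX; rewrite /in_tri0 -/a -/b -/c; case: (0 < a); case: (0 < b); case: (0 < c).
have [nD [wa wb wc]] := same_sign_div_sum_ge0 (nX 1 2 isT) (nX 2 0 isT) (nX 0 1 isT) sgn.
(* The weights come from [det2_cramer]. *)
exists (fun i : 'I_3 => [:: a; b; c]`_i / (a + b + c)); split; last split.
- by case=> [[|[|[|//]]] ?].
- by rewrite sum_ord3 /= -!mulrDl divff.
rewrite (@sum_ord3 'rV[R]_2) /= ![_ / (a + b + c)]mulrC -!scalerA -!scalerDr.
by rewrite det2_cramer scaler0.
Qed.

Lemma in_conv3_in_tri0 : in_conv X 0 -> in_tri0 (X 0) (X 1) (X 2).
Proof.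
move=> hX.
have pos i : exists j, 0 < det2 (X i) (X j).
  apply: in_conv0_det2_gt0 hX => [j ji|]; first by rewrite nX // eq_sym.
  by have [->|i0] := eqVneq i 0; [exists 1 | exists 0; rewrite eq_sym].
have flip i j : i != j -> (0 < det2 (X j) (X i)) = ~~ (0 < det2 (X i) (X j)).
  by move=> ij; rewrite det2C neq0_oppr_gt0E ?nX.
have [j0 p0] := pos 0; have [j1 p1] := pos 1; have [j2 p2] := pos 2.
move: p0 p1 p2; rewrite /in_tri0.
case: (ord3_cases j0) => ->; case: (ord3_cases j1) => ->; case: (ord3_cases j2) => ->;
  rewrite ?det2xx ?ltxx ?(flip 0 1) ?(flip 1 2) ?(flip 2 0) //.
all: by case: (0 < det2 (X 0) (X 1)); case: (0 < det2 (X 1) (X 2));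
  case: (0 < det2 (X 2) (X 0)).
Qed.

End Triangle.

Lemma in_tri0_in_conv {I : finType} {Y : I -> point R} (u v w : I) :
  det2 (Y u) (Y v) != 0 -> det2 (Y v) (Y w) != 0 -> det2 (Y w) (Y u) != 0 ->
  in_tri0 (Y u) (Y v) (Y w) -> in_conv Y 0.
Proof.
move=> nuv nvw nwu h; apply: (in_conv_comp (fun j : 'I_3 => nth u [:: u; v; w] j)).
apply: in_tri0_in_conv3 h => i j.
by case: (ord3_cases i) => ->; case: (ord3_cases j) => -> //= _;
  rewrite // det2C oppr_eq0.
Qed.

End PlaneDeterminant.

(** * Colourful triangles *)

Section Configuration.
Context {R : realFieldType}.

Definition label := ('I_3 * 'I_3)%type.

Definition pt (S : config R) (l : label) := S l.1 l.2.

Definition tri0 (S : config R) (l1 l2 l3 : label) :=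
  in_tri0 (pt S l1) (pt S l2) (pt S l3).

Definition rainbow (l1 l2 l3 : label) := [&& l1.1 != l2.1, l2.1 != l3.1 & l3.1 != l1.1].

Lemma colour_neq {l l' : label} : l.1 != l'.1 -> l != l'.
Proof. by apply: contra_neq => ->. Qed.

Lemma tri0_rot S l1 l2 l3 : tri0 S l1 l2 l3 = tri0 S l2 l3 l1.
Proof. exact: in_tri0_rot. Qed.

Section GeneralPosition.
Variable S : config R.
Hypothesis gp : general_position S.

Lemma det2_pt_neq0 {l l' : label} : l != l' -> det2 (pt S l) (pt S l') != 0.
Proof.
move=> ll'; have := gp.2 None (Some l) (Some l') isT isT ll'.
by rewrite /collinear /= !mxE !subr0 => ncol; apply/eqP.
Qed.

Lemma tri0_replace {l1 l2 l3 x : label} :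
  l1 != l2 -> l2 != l3 -> l3 != l1 -> x != l1 -> x != l2 -> x != l3 ->
  tri0 S l1 l2 l3 -> [|| tri0 S x l2 l3, tri0 S l1 x l3 | tri0 S l1 l2 x].
Proof. by move=> *; apply: in_tri0_replace => //; apply: det2_pt_neq0. Qed.

Lemma colourful_containsE t :
  colourful_contains S t <-> tri0 S (0, t 0) (1, t 1) (2, t 2).
Proof.
have nX i j : i != j -> det2 (S i (t i)) (S j (t j)) != 0.
  by move=> ij; apply: (@det2_pt_neq0 (i, t i) (j, t j)); apply: colour_neq.
by split; [apply: in_conv3_in_tri0 | apply: in_tri0_in_conv3].
Qed.

Lemma colourful_of_rainbow {l1 l2 l3 : label} :
  rainbow l1 l2 l3 -> tri0 S l1 l2 l3 -> exists t, colourful_contains S t.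
Proof.
case/and3P => n12 n23 n31 h.
pose t := [ffun c => if c == l1.1 then l1.2 else if c == l2.1 then l2.2 else l3.2].
have [t1 t2 t3] : [/\ t l1.1 = l1.2, t l2.1 = l2.2 & t l3.1 = l3.2].
  by rewrite !ffunE eqxx (negbTE n31) eq_sym (negbTE n12) eqxx eq_sym (negbTE n23).
exists t; apply: (in_tri0_in_conv l1.1 l2.1 l3.1); rewrite ?t1 ?t2 ?t3 //.
all: by apply: (@det2_pt_neq0 (_, _) (_, _)); apply: colour_neq; rewrite // eq_sym.
Qed.

Section NoColourful.
Hypothesis pc : pair_condition S.
Hypothesis no_colourful : forall t, ~ colourful_contains S t.

Lemma rainbow_not_tri0 (l1 l2 l3 : label) : rainbow l1 l2 l3 -> ~ tri0 S l1 l2 l3.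
Proof. by move=> rb /(colourful_of_rainbow rb) [t /no_colourful]. Qed.

Lemma tri0_keep_edge (p q r x : label) : p != q -> p.1 = q.1 ->
  [&& p.1 != r.1, p.1 != x.1 & r.1 != x.1] -> tri0 S p q r -> tri0 S p q x.
Proof.
move=> pq epq /and3P [pr px rx] h.
have [qr qx] : q.1 != r.1 /\ q.1 != x.1 by rewrite -epq.
have ne (l l' : label) : l'.1 != l.1 -> l != l'.
  by move=> ?; apply: colour_neq; rewrite eq_sym.
have := tri0_replace pq (colour_neq qr) (ne _ _ pr) (ne _ _ px) (ne _ _ qx) (ne _ _ rx) h.
by case/or3P => // /rainbow_not_tri0 []; apply/and3P; split; rewrite // eq_sym.
Qed.

Lemma tri0_monochrome_edge_false {p q r : label} :
  p != q -> p.1 = q.1 -> r.1 != p.1 -> ~ tri0 S p q r.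
Proof.
move=> pq epq rp h.
set i := p.1 in epq rp *; set j := r.1 in rp *; set k := other_ord3 i j.
have /andP [ki kj] := other_ord3P i j.
have colour_k x : x.1 = k -> tri0 S p q x.
  move=> xk; apply: (@tri0_keep_edge p q r x pq epq _ h).
  by rewrite xk !(eq_sym _ k) ki kj eq_sym rp.
have colour_j x : x.1 = j -> tri0 S p q x.
  move=> xj; apply: (@tri0_keep_edge p q (k, 0) x pq epq _ (colour_k (k, 0) erefl)).
  by rewrite xj /= !(eq_sym i) ki rp.
have jk : j != k by rewrite eq_sym.
apply: (in_conv0_no_tri0_edge (pc j k jk) (det2_pt_neq0 pq)) => [[b c]|[b c]|[[] c]].
- apply: (@det2_pt_neq0 q (if b then j else k, c)); apply: colour_neq.
  by rewrite -epq; case: b; rewrite eq_sym.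
- apply: (@det2_pt_neq0 (if b then j else k, c) p); apply: colour_neq.
  by case: b.
- exact: (colour_j (j, c) erefl).
- exact: (colour_k (k, c) erefl).
Qed.

Lemma tri0_false {l1 l2 l3 : label} :
  l1 != l2 -> l2 != l3 -> l3 != l1 -> ~ tri0 S l1 l2 l3.
Proof.
have monochrome (a b c : label) : tri0 S a b c -> a != b -> b != c -> c != a ->
    (a.1 == b.1) && (b.1 == c.1).
  move=> h ab bc ca; apply: contraT => mixed; exfalso.
  have [eab|nab] := eqVneq a.1 b.1.
    apply: (tri0_monochrome_edge_false ab eab _ h).
    by apply: contraNneq mixed => ->; rewrite eab !eqxx.
  have [ebc|nbc] := eqVneq b.1 c.1.
    by move: h; rewrite tri0_rot; apply: (tri0_monochrome_edge_false bc ebc nab).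
  have [eca|nca] := eqVneq c.1 a.1.
    by move: h; rewrite -tri0_rot; apply: (tri0_monochrome_edge_false ca eca nbc).
  by apply: rainbow_not_tri0 h; apply/and3P.
move=> n12 n23 n31 h.
have /andP [/eqP e12 /eqP e23] := monochrome _ _ _ h n12 n23 n31.
pose x : label := (other_ord3 l1.1 l1.1, 0).
have /andP [x1 _] := other_ord3P l1.1 l1.1.
have nx l : l.1 = l1.1 -> x != l by move=> e; apply: colour_neq; rewrite e.
have nx1 := nx l1 erefl.
have nx2 : x != l2 by apply: nx; rewrite e12.
have nx3 : x != l3 by apply: nx; rewrite e12 e23.
case/or3P: (tri0_replace n12 n23 n31 nx1 nx2 nx3 h) => /monochrome;
  rewrite !(eq_sym _ x) ?nx1 ?nx2 ?nx3 ?n12 ?n23 ?n31 /= -?e23 -?e12.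
all: by rewrite ?(eq_sym l1.1 (other_ord3 _ _)) (negbTE x1) ?andbF; move/(_ isT isT isT).
Qed.

End NoColourful.

Lemma exists_colourful : pair_condition S -> exists t, colourful_contains S t.
Proof.
move=> pc; apply: NNPP => none.
have no_colourful t : ~ colourful_contains S t by move=> ht; apply: none; exists t.
pose g (bk : bool * 'I_3) : label := (if bk.1 then 0 else 1, bk.2).
have g_inj : injective g by move=> [[] ?] [[] ?] [] //= ->.
have [||i [j [k [ij jk ki]]]] :=
  @in_conv0_pos_tri _ _ (fun bk => pt S (g bk)) _ _ (pc 0 1 isT).
- by move=> a b ab; apply: det2_pt_neq0; rewrite (inj_eq g_inj).
- by exists (true, 0), (false, 0).
have neq a b : 0 < det2 (pt S a) (pt S b) -> a != b.
  by apply: contraTneq => ->; rewrite det2xx ltxx.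
apply: (tri0_false pc no_colourful (neq _ _ ij) (neq _ _ jk) (neq _ _ ki)).
by rewrite /tri0 /in_tri0 ij jk ki.
Qed.

Lemma colourful_avoid {T : {ffun 'I_3 -> 'I_3}} u : colourful_contains S T ->
  exists t, [/\ colourful_contains S t, t != T & t != u].
Proof.
move=> /colourful_containsE hT.
pose y c := other_ord3 (T c) (u c).
pose P c (b : bool) : label := (c, if b then y c else T c).
pose W : label := (0, other_ord3 (T 0) (y 0)).
have nP c c' b b' : c != c' -> det2 (pt S (P c b)) (pt S (P c' b')) != 0.
  by move=> cc'; apply: det2_pt_neq0; apply: colour_neq.
have nW c b : det2 (pt S W) (pt S (P c b)) != 0.
  have /andP [oT oy] := other_ord3P (T 0) (y 0).
  apply: det2_pt_neq0; rewrite xpair_eqE negb_and.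
  by case: eqP => [<-|] //=; case: b.
have [] := @octahedron_other_facet _ (pt S W) (fun b => pt S (P 0 b))
  (fun b => pt S (P 1 b)) (fun b => pt S (P 2 b)) (nW 0) (nW 1) (nW 2)
  (fun b b' => nP 0 1 b b' isT) (fun b b' => nP 1 2 b b' isT)
  (fun b b' => nP 2 0 b b' isT) hT.
move=> b0 [b1 [b2 /andP [b hb]]].
pose t := [ffun c : 'I_3 => if nth false [:: b0; b1; b2] c then y c else T c].
have [c bc] : exists c : 'I_3, nth false [:: b0; b1; b2] c.
  by case/orP: b => [/orP [] |] ?; [exists 0 | exists 1 | exists 2].
have tc : t c = y c by rewrite ffunE bc.
have /andP [yT yu] : (y c != T c) && (y c != u c) := other_ord3P _ _.
exists t; split.
- by apply/colourful_containsE; rewrite /tri0 !ffunE.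
- by apply: contra_neq yT => tT; rewrite -tc tT.
- by apply: contra_neq yu => tu; rewrite -tc tu.
Qed.

Lemma num_colourful_ge3 : pair_condition S -> (3 <= num_colourful S)%N.
Proof.
move=> pc; have [T hT] := exists_colourful pc.
have [t1 [h1 t1T _]] := colourful_avoid T hT.
have [t2 [h2 t2T t2t1]] := colourful_avoid t1 hT.
have sub : T |: [set t1; t2] \subset [set t | asbool (colourful_contains S t)].
  by apply/subsetP => t; rewrite !inE => /orP [|/orP []] /eqP ->; apply/asboolP.
apply: leq_trans (subset_leq_card sub).
by rewrite cardsU1 cards2 !inE negb_or ![T == _]eq_sym t1T t2T eq_sym t2t1.
Qed.

End GeneralPosition.

End Configuration.

(** * A configuration with exactly three colourful triangles *)

Definition example_coords (c k : 'I_3) : int * int :=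
  match nat_of_ord c, nat_of_ord k with
  | O, O => (0, 3) | O, S O => (1, - 5) | O, _ => (- 4, 4)
  | S O, O => (1, 2) | S O, S O => (2, 5) | S O, _ => (3, 5)
  | _, O => (2, 2) | _, S O => (- 6, - 2) | _, _ => (5, - 4)
  end.

Definition example_coords_opt (o : option label) : int * int :=
  if o is Some l then example_coords l.1 l.2 else (0, 0).

Definition detZ (z z' : int * int) : int := z.1 * z'.2 - z.2 * z'.1.

Definition collinearZ (a b c : int * int) : int :=
  (b.1 - a.1) * (c.2 - a.2) - (b.2 - a.2) * (c.1 - a.1).

Definition in_tri0Z (a b c : int * int) :=
  ((0 < detZ a b) == (0 < detZ b c)) && ((0 < detZ b c) == (0 < detZ c a)).

Definition ords3 : seq 'I_3 := [:: 0; 1; 2].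

Definition option_labels : seq (option label) :=
  None :: [seq Some (c, k) | c <- ords3, k <- ords3].

Lemma mem_option_labels o : o \in option_labels.
Proof.
case: o => [[c k]|]; last by vm_compute.
by case: (ord3_cases c) => ->; case: (ord3_cases k) => ->; vm_compute.
Qed.

Lemma example_coords_opt_inj : all (fun a => all (fun b =>
  (example_coords_opt a == example_coords_opt b) ==> (a == b))
  option_labels) option_labels.
Proof. by vm_compute. Qed.

Lemma example_not_collinearZ : all (fun a => all (fun b => all (fun c =>
  [&& a != b, a != c & b != c] ==>
  (collinearZ (example_coords_opt a) (example_coords_opt b) (example_coords_opt c) != 0))
  option_labels) option_labels) option_labels.
Proof. by vm_compute. Qed.

Lemma example_in_tri0Z (a b c : 'I_3) :
  in_tri0Z (example_coords 0 a) (example_coords 1 b) (example_coords 2 c) =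
  (a == 1) && (c == 1).
Proof.
by case: (ord3_cases a) => ->; case: (ord3_cases b) => ->; case: (ord3_cases c) => ->;
  vm_compute.
Qed.

Section Example.
Context {R : realFieldType}.

Definition int_point (z : int * int) : point R :=
  \row_(j < 2) (if j == 0 then z.1 else z.2)%:~R.

Lemma int_point00 z : int_point z 0 0 = z.1%:~R.
Proof. by rewrite mxE. Qed.

Lemma int_point01 z : int_point z 0 1 = z.2%:~R.
Proof. by rewrite mxE. Qed.

Lemma det2_int_point z z' : det2 (int_point z) (int_point z') = (detZ z z')%:~R.
Proof. by rewrite /det2 !int_point00 !int_point01 -!intrM -intrB. Qed.

Lemma in_tri0_int_point a b c :
  in_tri0 (int_point a) (int_point b) (int_point c) = in_tri0Z a b c.
Proof. by rewrite /in_tri0 !det2_int_point !ltr0z. Qed.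

Definition example : config R := fun c k => int_point (example_coords c k).

Lemma all_pts_example o : all_pts example o = int_point (example_coords_opt o).
Proof. by case: o => //; apply/rowP => j; rewrite !mxE; case: ifP. Qed.

Lemma example_general_position : general_position example.
Proof.
split=> [a b|a b c ab ac bc].
  rewrite !all_pts_example => eab.
  have := congr1 (fun p : point R => p 0 0) eab; rewrite /= !int_point00 => /intr_inj e1.
  have := congr1 (fun p : point R => p 0 1) eab; rewrite /= !int_point01 => /intr_inj e2.
  apply/eqP; move/allP: example_coords_opt_inj => /(_ a (mem_option_labels a)).
  move/allP => /(_ b (mem_option_labels b)) /implyP; apply.
  by apply/eqP/injective_projections.
rewrite /collinear !all_pts_example !int_point00 !int_point01 -!intrB -!intrM -intrB.
move/eqP; rewrite intr_eq0; apply/negP.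
move/allP: example_not_collinearZ => /(_ a (mem_option_labels a)).
move/allP => /(_ b (mem_option_labels b)) /allP /(_ c (mem_option_labels c)).
by rewrite ab ac bc.
Qed.

Lemma example_pair_condition : pair_condition example.
Proof.
move=> i j; case: (ord3_cases i) => ->; case: (ord3_cases j) => -> // _;
  [ apply: (in_tri0_in_conv (true, 0) (true, 1) (true, 2))
  | apply: (in_tri0_in_conv (true, 0) (true, 1) (true, 2))
  | apply: (in_tri0_in_conv (false, 0) (false, 1) (false, 2))
  | apply: (in_tri0_in_conv (true, 0) (false, 1) (false, 2))
  | apply: (in_tri0_in_conv (false, 0) (false, 1) (false, 2))
  | apply: (in_tri0_in_conv (false, 0) (true, 1) (true, 2)) ];
  by rewrite /example ?det2_int_point ?intr_eq0 ?in_tri0_int_point; vm_compute.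
Qed.

Lemma num_colourful_example : num_colourful example = 3%N.
Proof.
pose f (k : 'I_3) : {ffun 'I_3 -> 'I_3} := [ffun c => if c == 1 then k else 1].
have f_inj : injective f by move=> k k' /ffunP /(_ 1); rewrite !ffunE.
rewrite -[3%N]card_ord -(card_imset _ f_inj) /num_colourful; apply: eq_card => t.
rewrite inE; apply/asboolP/imsetP => [|[k _ ->]]; last first.
  apply/(colourful_containsE _ example_general_position).
  by rewrite /tri0 /pt /= /example !in_tri0_int_point example_in_tri0Z !ffunE.
move/(colourful_containsE _ example_general_position).
rewrite /tri0 /pt /= /example !in_tri0_int_point example_in_tri0Z.
case/andP => /eqP t0 /eqP t2.
by exists (t 1) => //; apply/ffunP => c; rewrite ffunE; case: (ord3_cases c) => ->.
Qed.

End Example.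

Theorem mainTheorem3 (R : realFieldType) :
  (forall S : config R,
     general_position S -> pair_condition S -> (3 <= num_colourful S)%N) /\
  (exists S : config R,
     general_position S /\ pair_condition S /\ num_colourful S = 3%N).
Proof.
split; first exact: num_colourful_ge3.
exists example; split; first exact: example_general_position.
by split; [exact: example_pair_condition | exact: num_colourful_example].
Qed.
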